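(* For every $\epsilon>0$ there exists $\delta>0$ such that, for $k<e^{\delta n}$ (where $n$ is the number of variables), no deterministic online width-cut-$k$ algorithm can achieve an asymptotic approximation ratio of $5/6+\epsilon$ for unweighted max-2-sat with input model 3.
   Context: Unweighted max-2-sat: the input is a CNF formula whose clauses have at most two literals, each of weight 1; the goal is an assignment maximizing the number of satisfied clauses. Online: variables arrive one at a time in adversarial order and each must be irrevocably assigned upon arrival. In input model 3, the data item of a variable contains the complete description of every clause in which it occurs (names, weights, lengths, and all the other variables in those clauses together with their signs), separated into clauses where it appears positively and negatively. Width-cut-$k$ model: the algorithm maintains a tree of partial assignments with the empty assignment as root at level 0; when the $i$-th variable is processed each node at level $i-1$ may get any number of children (including zero), each extending it by a value for that variable; at most $k$ nodes exist at each level; at the end the best complete assignment is output. The asymptotic approximation ratio of $\mathbb{A}$ is $\liminf_{n}\inf_{I\in\mathcal{I}_n} v(\mathbb{A},I)/v(I)$. *)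

From HB Require Import structures.
From mathcomp Require Import all_boot all_order all_algebra.
From mathcomp Require Import all_classical all_reals all_analysis.
Set Implicit Arguments. Unset Strict Implicit. Unset Printing Implicit Defensive.
Import Order.TTheory GRing.Theory Num.Theory.

(* A literal is (variable name, sign); sign = true means positive. *)
Definition literal := (nat * bool)%type.
(* A named clause: (clause name, list of literals).  All weights are 1. *)
Definition nclause := (nat * seq literal)%type.

(* An input instance: the variables in their (adversarial) arrival order,
   together with the named clauses of the formula. *)
Record instance := Instance { vars : seq nat; clauses : seq nclause }.

Definition clause_ok (V : seq nat) (c : seq literal) : bool :=
  [&& 0 < size c <= 2,
      all (fun l => l.1 \in V) c &
      uniq (map fst c)].

Definition wf (I : instance) : bool :=
  [&& uniq (vars I), uniq (map fst (clauses I)) &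
      all (fun c => clause_ok (vars I) c.2) (clauses I)].

Definition nvars (I : instance) : nat := size (vars I).

(* Input model 3 data item: the variable name, the clauses where it occurs
   positively and those where it occurs negatively (complete descriptions),
   listed in a canonical order (sorted by clause name). *)
Definition item := (nat * seq nclause * seq nclause)%type.

Definition by_name (c d : nclause) : bool := (c.1 <= d.1)%N.

Definition data_item (I : instance) (x : nat) : item :=
  (x, sort by_name [seq c <- clauses I | (x, true) \in c.2],
      sort by_name [seq c <- clauses I | (x, false) \in c.2]).

Definition items (I : instance) : seq item := map (data_item I) (vars I).

(* Satisfaction by an assignment a : seq bool, where a`_j is the value of
   the j-th arriving variable. *)
Definition val (I : instance) (a : seq bool) (x : nat) : bool :=
  nth false a (index x (vars I)).

Definition sat_clause (I : instance) (a : seq bool) (c : seq literal) : bool :=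
  has (fun l => val I a l.1 == l.2) c.

Definition nsat (I : instance) (a : seq bool) : nat :=
  count (fun c => sat_clause I a c.2) (clauses I).

Definition opt (I : instance) : nat :=
  \max_(t : (nvars I).-tuple bool) nsat I t.

(* A deterministic online width-cut algorithm: [A n hist node b] decides,
   when the i-th variable is processed (hist = the i data items seen so far,
   the current one last; n = the number of variables), whether the node
   [node] (a partial assignment at level i-1) gets a child extending it by
   value b. *)
Definition alg := nat -> seq item -> seq bool -> bool -> bool.

Fixpoint level (A : alg) (n : nat) (its : seq item) (i : nat) : seq (seq bool) :=
  match i with
  | 0 => [:: [::]]
  | i'.+1 =>
      flatten [seq [seq rcons a b | b <- [:: false; true] & A n (take i'.+1 its) a b]
              | a <- level A n its i']
  end.

Definition width_cut (A : alg) (k : nat -> nat) : Prop :=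
  forall I, wf I -> forall i, (i <= nvars I)%N ->
    (size (level A (nvars I) (items I) i) <= k (nvars I))%N.

(* v(A, I): best complete assignment in the tree (0 if there is none). *)
Definition algval (A : alg) (I : instance) : nat :=
  \max_(a <- level A (nvars I) (items I) (nvars I)) nsat I a.

Local Open Scope ring_scope.
Local Open Scope classical_set_scope.

(* v(A,I)/v(I), with the convention 1 when v(I) = 0 (formula with no clauses). *)
Definition ratio (R : realType) (A : alg) (I : instance) : R :=
  if opt I == 0%N then 1 else (algval A I)%:R / (opt I)%:R.

Definition worst_ratio (R : realType) (A : alg) (n : nat) : R :=
  inf [set ratio R A I | I in [set I | wf I /\ nvars I = n]].

Definition asym_ratio (R : realType) (A : alg) : R :=
  limn_inf (fun n => worst_ratio R A n).

From Pilot Require Import Defs.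
From HB Require Import structures.
From mathcomp Require Import all_boot all_order all_algebra.
From mathcomp Require Import all_classical all_reals all_analysis.
From mathcomp Require Import zify ring lra.
Import Order.TTheory GRing.Theory Num.Theory.

(* The adversary uses m disjoint gadgets on variables x_i, y_i, z_i: the
   clauses (x_i \/ y_i), (~x_i \/ z_i) and a unit clause ~z_i or ~y_i chosen
   by a hidden bit p_i.  All 3m clauses are satisfiable, but an assignment
   with x_i = p_i satisfies at most two clauses of gadget i.  The x_i arrive
   first and their data items do not depend on p, so once they are processed
   the tree holds the same at most k partial assignments whatever p is.
   Summing t^(agreement with p) over all p gives (1 + t)^m for each node;
   with t = e^(-g/4) this first-moment count shows that if k < e^(g^2 n/24)
   some p agrees with every node on more than (1/2 - g) m of the x_i.  The
   algorithm then satisfies fewer than 3m - (1/2 - g) m clauses, a ratio of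
   at most 5/6 + g/3. *)

Lemma level_take (A : alg) n its its' i :
  take i its = take i its' -> level A n its i = level A n its' i.
Proof.
elim: i => [//|i IH] /= E; congr flatten; rewrite E IH //.
by rewrite -[take i its](take_takel _ (leqnSn i)) E take_takel.
Qed.

Lemma size_level {A : alg} {n its i a} : a \in level A n its i -> size a = i.
Proof.
elim: i a => [|i IH] a /=; first by rewrite inE => /eqP ->.
by case/flattenP=> _ /mapP[a' /IH a'i ->] /mapP[b _ ->]; rewrite size_rcons a'i.
Qed.

Lemma take_level (A : alg) n its i i' a :
  (i <= i')%N -> a \in level A n its i' -> take i a \in level A n its i.
Proof.
elim: i' a => [|i' IH] a.
  by rewrite leqn0 => /eqP-> /[dup] /size_level <-; rewrite take_size.
rewrite leq_eqVlt => /predU1P[-> /[dup] /size_level <-|]; first by rewrite take_size.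
rewrite ltnS => le_i /= /flattenP[_ /mapP[a' a'in ->] /mapP[b _ ->]].
by rewrite -cats1 takel_cat ?(size_level a'in) //; exact: IH.
Qed.

Section HardInstance.

Variable m : nat.

(* x_i, y_i, z_i are the variables i, m + i, 2m + i; the variables arrive as
   0, ..., 3m - 1, so all x_i come first. *)
Definition gadget (p : bool) (i : nat) : seq nclause :=
  [:: (3 * i, [:: (i, true); (m + i, true)]);
      (3 * i + 1, [:: (i, false); (2 * m + i, true)]);
      (3 * i + 2, if p then [:: (2 * m + i, false)] else [:: (m + i, false)])].

Definition hard_instance (p : nat -> bool) : instance :=
  Instance (iota 0 (3 * m)) (flatten [seq gadget (p i) i | i <- iota 0 m]).

Lemma take_items_hard (p q : nat -> bool) :
  take m (items (hard_instance p)) = take m (items (hard_instance q)).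
Proof.
rewrite /items -!map_take take_iota; apply/eq_in_map => x.
rewrite mem_iota add0n => /leq_trans/(_ (geq_minl _ _)) xm.
rewrite /data_item /= !filter_flatten -!map_comp.
have gadgetE b b' i l :
    [seq c <- gadget b i | (x, l) \in c.2] = [seq c <- gadget b' i | (x, l) \in c.2].
  have [xy xz] : x != m + i /\ x != 2 * m + i by split; apply/eqP; lia.
  by case: b b' => -[] //=; rewrite !inE !xpair_eqE (negbTE xy) (negbTE xz).
by congr (_, sort _ (flatten _), sort _ (flatten _)); apply/eq_map => i; exact: gadgetE.
Qed.

Variable p : nat -> bool.

Lemma nvars_hard : nvars (hard_instance p) = (3 * m)%N.
Proof. exact: size_iota. Qed.

Lemma names_gadgets s r :
  map fst (flatten [seq gadget (p i) i | i <- iota s r]) = iota (3 * s) (3 * r).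
Proof.
elim: r s => [|r IH] s; first by rewrite muln0.
by rewrite mulnS iotaD /= IH addn1 addn2 -mulnSr.
Qed.

Lemma size_clauses_hard : size (clauses (hard_instance p)) = (3 * m)%N.
Proof. by rewrite -(size_map fst) names_gadgets size_iota. Qed.

Lemma wf_hard : wf (hard_instance p).
Proof.
apply/and3P; split; first exact: iota_uniq.
  by rewrite names_gadgets iota_uniq.
apply/allP => c /flattenP[g /mapP[i]]; rewrite mem_iota add0n => /andP[_ im] ->.
have [x_in y_in z_in] : [/\ i \in iota 0 (3 * m), m + i \in iota 0 (3 * m)
                          & 2 * m + i \in iota 0 (3 * m)].
  by rewrite !mem_iota; split; lia.
have [xy xz] : i != m + i /\ i != 2 * m + i by split; apply/eqP; lia.
rewrite !inE => /or3P[] /eqP-> /=; rewrite /clause_ok /= ?x_in ?y_in ?z_in ?inE ?xy ?xz //.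
by case: (p i); rewrite /= ?y_in ?z_in.
Qed.

Lemma val_hard a x : (x < 3 * m)%N -> Defs.val (hard_instance p) a x = nth false a x.
Proof.
move=> xm; rewrite /Defs.val /=.
have := nth_iota 0 0 xm; rewrite add0n => {1}<-.
by rewrite index_uniq ?iota_uniq ?size_iota.
Qed.

Definition agreement (a : seq bool) : nat := \sum_(i < m) (nth false a i == p i).

Lemma agreement_take a : agreement (take m a) = agreement a.
Proof. by apply: eq_bigr => i _; rewrite nth_take. Qed.

Lemma gadget_sat_agreement a i : (i < m)%N ->
  (count (fun c => sat_clause (hard_instance p) a c.2) (gadget (p i) i)
   + (nth false a i == p i) <= 3)%N.
Proof.
move=> im; rewrite /sat_clause /= !val_hard; try lia.
by case: (p i); rewrite /= !val_hard; try lia;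
  case: (nth false a i); case: (nth false a (m + i)); case: (nth false a (2 * m + i)).
Qed.

Lemma nsat_hard_agreement a : (nsat (hard_instance p) a + agreement a <= 3 * m)%N.
Proof.
rewrite /nsat count_flatten sumnE !big_map /agreement.
rewrite -(big_mkord xpredT (fun i => nat_of_bool (nth false a i == p i))) /index_iota subn0.
have -> : (3 * m = \sum_(i <- iota 0 m) 3)%N.
  by rewrite big_const_seq count_predT size_iota iter_addn_0.
rewrite -big_split big_seq [X in (_ <= X)%N]big_seq /=; apply: leq_sum => i.
by rewrite mem_iota add0n => /andP[_ im]; exact: gadget_sat_agreement.
Qed.

Definition sat_assignment (x : nat) : bool :=
  if (x < m)%N then ~~ p x else if (x < 2 * m)%N then p (x - m) else ~~ p (x - 2 * m).

Lemma opt_hard : (3 * m <= opt (hard_instance p))%N.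
Proof.
set I := hard_instance p; set a := mkseq sat_assignment (nvars I).
have size_a : size a == nvars I by rewrite size_mkseq.
apply: leq_trans (leq_bigmax (Tuple size_a)); rewrite -size_clauses_hard /nsat.
apply/eq_leq/esym/eqP; rewrite -all_count; apply/allP => c /flattenP[g /mapP[i]].
rewrite mem_iota add0n => /andP[_ im] -> {g}.
have aE x : (x < 3 * m)%N -> Defs.val I a x = sat_assignment x.
  by move=> xm; rewrite val_hard // nth_mkseq // nvars_hard.
have [ax ay az] : [/\ Defs.val I a i = ~~ p i, Defs.val I a (m + i) = p i
                   & Defs.val I a (2 * m + i) = ~~ p i].
  rewrite !aE /sat_assignment; try lia.
  have [-> -> ->] : [/\ (i < m)%N, (m + i < m)%N = false & (m + i < 2 * m)%N] by split; lia.
  have [-> ->] : (2 * m + i < m)%N = false /\ (2 * m + i < 2 * m)%N = false by split; lia.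
  by rewrite !addKn.
by case: (p i) ax ay az => ax ay az;
  rewrite !inE => /or3P[] /eqP-> /=; rewrite /sat_clause /= ?ax ?ay ?az.
Qed.

Lemma algval_hard (A : alg) j : (j < m)%N ->
  (forall a, a \in level A (3 * m) (items (hard_instance p)) m -> (j < agreement a)%N) ->
  (algval A (hard_instance p) + j < 3 * m)%N.
Proof.
move=> jm far; suff: (algval A (hard_instance p) <= 3 * m - j.+1)%N by lia.
rewrite /algval nvars_hard; apply/bigmax_leqP_seq => a a_in _.
have /far : take m a \in level A (3 * m) (items (hard_instance p)) m.
  by apply: take_level a_in; lia.
by rewrite agreement_take; have := nsat_hard_agreement a; lia.
Qed.

End HardInstance.

Local Open Scope ring_scope.

Lemma sum_pow_agreement {R : comPzSemiRingType} (t : R) m (a : seq bool) :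
  \sum_(f : {ffun 'I_m -> bool}) t ^+ (\sum_(i < m) (nth false a i == f i)) = (1 + t) ^+ m.
Proof.
under eq_bigr do rewrite -prodrXr.
rewrite -(bigA_distr_bigA (fun (i : 'I_m) b => t ^+ (nth false a i == b))) /=.
rewrite -[in RHS](card_ord m) -prodr_const; apply: eq_bigr => i _.
by rewrite big_bool; case: (nth false a i); rewrite /= expr1 expr0 // addrC.
Qed.

Lemma exists_far_assignment {R : realDomainType} m (S : seq (seq bool)) (t : R) j :
  0 <= t <= 1 -> (size S)%:R * (1 + t) ^+ m < 2 ^+ m * t ^+ j ->
  exists p : nat -> bool, forall a, a \in S -> (j < agreement m p a)%N.
Proof.
move=> /andP[t0 t1] small; case: (pickP (fun f : {ffun 'I_m -> bool} =>
  all (fun a => j < \sum_(i < m) (nth false a i == f i))%N S)) => [f /allP far | near].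
  exists (nth false (fgraph f)) => a /far; congr (_ < _)%N.
  by apply: eq_bigr => i _; rewrite nth_fgraph_ord.
exfalso; move: small; apply/negP; rewrite -leNgt.
have -> : 2 ^+ m * t ^+ j = \sum_(f : {ffun 'I_m -> bool}) t ^+ j.
  by rewrite sumr_const card_ffun card_bool card_ord -[RHS]mulr_natl natrX.
have -> : (size S)%:R * (1 + t) ^+ m =
    \sum_(f : {ffun 'I_m -> bool}) \sum_(a <- S) t ^+ (\sum_(i < m) (nth false a i == f i)).
  rewrite exchange_big /=; under eq_bigr do rewrite sum_pow_agreement.
  by rewrite big_const_seq count_predT iter_addr_0 mulr_natl.
apply: ler_sum => f _; have /negbT/allPn[a a_in] := near f; rewrite -leqNgt => le_j.
apply: le_trans (ler_wiXn2l t0 t1 le_j) _.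
by rewrite (big_rem a) //= lerDl sumr_ge0 // => b _; rewrite exprn_ge0.
Qed.

Lemma expR_le_quadratic {R : realType} (x : R) :
  x <= 1 / 2 -> expR x <= 1 + x + 2 * x ^+ 2.
Proof.
move=> x_le; have x1 : 0 < 1 - x by lra.
rewrite -[x]opprK expRN; apply: (@le_trans _ _ (1 - x)^-1).
  by rewrite lef_pV2 ?posrE ?expR_gt0 // expR_ge1Dx.
rewrite -[(1 - x)^-1]mulr1 ler_pdivrMl // opprK.
have : 0 <= x ^+ 2 * (1 - 2 * x) by rewrite mulr_ge0 ?sqr_ge0 //; lra.
by rewrite expr2; nra.
Qed.

Lemma expR_mul1B_le1 {R : realType} (x : R) : expR x * (1 - x) <= 1.
Proof.
have e : expR x * expR (- x) = 1 by rewrite -expRD subrr expR0.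
by rewrite -[leRHS]e ler_pM2l ?expR_gt0 //; exact: expR_ge1Dx.
Qed.

Lemma chernoff_step {R : realType} (g : R) : 0 < g <= 1 / 2 ->
  expR (g ^+ 2 / 8) * (1 + expR (- (g / 4))) <= 2 * expR (- (g / 4 * (1 / 2 - g))).
Proof.
move=> /andP[g0 g1]; set u := g / 4 * (1 / 2 - g).
rewrite -(ler_pM2r (expR_gt0 u)) -mulrA mulrDl mul1r -expRD.
rewrite -[leRHS]mulrA -expRD addNr expR0 mulr1.
have eu := expR_le_quadratic u; have ev := expR_le_quadratic (- (g / 4) + u).
have le_sum : expR u + expR (- (g / 4) + u) <= 2 * (1 - g ^+ 2 / 8).
  have : 0 <= g ^+ 2 * (3 / 4 - g ^+ 2) by rewrite mulr_ge0 ?sqr_ge0 //; nra.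
  by move: eu ev; rewrite /u !expr2; nra.
apply: le_trans (ler_wpM2l (expR_ge0 _) le_sum) _.
by rewrite mulrCA -[leRHS]mulr1 ler_pM2l // expR_mul1B_le1.
Qed.

Lemma chernoff_bound {R : realType} (g : R) (m j : nat) :
  0 < g <= 1 / 2 -> j%:R <= (1 / 2 - g) * m%:R ->
  expR (g ^+ 2 / 8 * m%:R) * (1 + expR (- (g / 4))) ^+ m <= 2 ^+ m * expR (- (g / 4)) ^+ j.
Proof.
move=> g_bd j_le; have step := chernoff_step g g_bd.
have base_ge0 : 0 <= expR (g ^+ 2 / 8) * (1 + expR (- (g / 4))).
  by rewrite mulr_ge0 ?expR_ge0 // addr_ge0 ?expR_ge0.
rewrite expRM_natr -exprMn.
apply: le_trans (_ : _ <= (2 * expR (- (g / 4 * (1 / 2 - g)))) ^+ m) _.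
  by rewrite lerXn2r ?nnegrE // (le_trans base_ge0).
rewrite exprMn ler_pM2l ?exprn_gt0 // -!expRM_natr ler_expR.
by case/andP: g_bd => g0 _; nra.
Qed.

Section Ratios.

Variables (R : realType) (A : alg).

Local Open Scope classical_set_scope.

Lemma ratio_ge0 I : 0 <= Defs.ratio R A I.
Proof. by rewrite /Defs.ratio; case: ifP => // _; rewrite divr_ge0. Qed.

Lemma ratio_le1B I n l : (0 < n)%N -> (n <= opt I)%N -> (algval A I + l <= n)%N ->
  Defs.ratio R A I <= 1 - l%:R / n%:R.
Proof.
move=> n0 n_opt alg_le; rewrite /Defs.ratio ifN; last by rewrite -lt0n (leq_trans n0).
have n0' : 0 < n%:R :> R by rewrite ltr0n.
apply: (@le_trans _ _ ((algval A I)%:R / n%:R)).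
  apply: ler_wpM2l; first exact: ler0n.
  by rewrite lef_pV2 ?posrE ?ler_nat ?ltr0n // (leq_trans n0).
by rewrite lerBrDr -mulrDl ler_pdivrMr // mul1r -natrD ler_nat.
Qed.

Lemma worst_ratio_le_ratio I : wf I -> worst_ratio R A (nvars I) <= Defs.ratio R A I.
Proof.
move=> wfI; apply: ge_inf; last by exists I.
by exists 0 => _ [J _ <-]; exact: ratio_ge0.
Qed.

Lemma worst_ratio_ge0_le1 n : 0 <= worst_ratio R A n <= 1.
Proof.
pose empty := Instance (iota 0 n) [::].
have wf_empty : wf empty by rewrite /wf /= iota_uniq.
have nvars_empty : nvars empty = n by rewrite /nvars size_iota.
have ratio_empty : Defs.ratio R A empty = 1 by rewrite /Defs.ratio /opt big1.
have lb : lbound [set Defs.ratio R A I | I in [set I | wf I /\ nvars I = n]] 0.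
  by move=> _ [I _ <-]; exact: ratio_ge0.
apply/andP; split; first by apply: lb_le_inf => //; exists 1, empty.
by rewrite -ratio_empty -{1}nvars_empty worst_ratio_le_ratio.
Qed.

Lemma bounded_worst_ratio : bounded_fun (worst_ratio R A).
Proof.
rewrite /bounded_near; near=> M => n _ /=; have /andP[w0 w1] := worst_ratio_ge0_le1 n.
rewrite ger0_norm //; apply: le_trans w1 _; near: M; exact: nbhs_pinfty_ge.
Unshelve. all: end_near. Qed.

End Ratios.

Lemma limn_inf_le (R : realType) (u : R^nat) l : bounded_fun u ->
  (forall N, exists2 n, (N <= n)%N & u n <= l) -> limn_inf u <= l.
Proof.
move=> bu fr; rewrite limn_infE //; apply: ge_sup; first by exists (infs u 0), 0%N.
move=> _ [N _ <-]; have [n Nn unl] := fr N.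
apply: le_trans unl; apply: ge_inf; last by exists n.
exact/has_lbound_sdrop/bounded_fun_has_lbound.
Qed.

Lemma worst_ratio_hard (R : realType) (A : alg) (k : nat -> nat) (g : R) m :
  0 < g <= 1 / 2 -> (0 < m)%N -> width_cut A k ->
  (k (3 * m)%N)%:R < expR (g ^+ 2 / 24 * (3 * m)%N%:R) ->
  worst_ratio R A (3 * m) <= 5%:R / 6%:R + g / 3.
Proof.
move=> g_bd m0 wc k_lt; have /andP[g0 g1] := g_bd.
set t := expR (- (g / 4)).
have t_bd : 0 <= t <= 1 by rewrite expR_ge0 /= -expR0 ler_expR; lra.
have am_ge0 : 0 <= (1 / 2 - g) * m%:R by rewrite mulr_ge0 ?ler0n //; lra.
set j := Num.truncn ((1 / 2 - g) * m%:R).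
have /andP[j_le j_gt] := truncn_itv am_ge0.
set S := level A (3 * m) (items (hard_instance m (fun=> false))) m.
have S_le : (size S <= k (3 * m))%N.
  by have := wc _ (wf_hard m (fun=> false)) m; rewrite nvars_hard; apply; lia.
have S_small : (size S)%:R * (1 + t) ^+ m < 2 ^+ m * t ^+ j.
  have t1 : 0 < 1 + t by case/andP: t_bd; lra.
  apply: (lt_le_trans _ (chernoff_bound g m j g_bd j_le)); rewrite ltr_pM2r ?exprn_gt0 //.
  have -> : g ^+ 2 / 8 * m%:R = g ^+ 2 / 24 * (3 * m)%:R by rewrite natrM; field.
  by apply: (le_lt_trans _ k_lt); rewrite ler_nat.
have [p far] := exists_far_assignment m S t j t_bd S_small.
have level_p : level A (3 * m) (items (hard_instance m p)) m = S.
  exact/level_take/take_items_hard.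
have m_pos : 0 < m%:R :> R by rewrite ltr0n.
have j_m : (j < m)%N by rewrite -(ltr_nat R); apply: (le_lt_trans j_le); nra.
have alg_le : (algval A (hard_instance m p) + j.+1 <= 3 * m)%N.
  by rewrite addnS; apply: algval_hard => //; rewrite level_p.
have := worst_ratio_le_ratio R A _ (wf_hard m p); rewrite nvars_hard => /le_trans; apply.
have m3_pos : (0 < 3 * m)%N by lia.
apply: le_trans (ratio_le1B R A _ _ _ m3_pos (opt_hard m p) alg_le) _.
have : (1 / 2 - g) / 3 <= j.+1%:R / (3 * m)%:R.
  by rewrite ler_pdivlMr ?ltr0n ?muln_gt0 // natrM; lra.
lra.
Qed.

Theorem theorem4 (R : realType) (eps : R) :
  0 < eps ->
  exists2 delta : R, 0 < delta &
    forall (A : alg) (k : nat -> nat),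
      (exists N : nat, forall n : nat, (N <= n)%N ->
          (k n)%:R < expR (delta * n%:R)) ->
      width_cut A k ->
      asym_ratio R A < 5%:R / 6%:R + eps.
Proof.
move=> eps0; pose g := Num.min eps (1 / 2).
have g_eps : g <= eps by rewrite /g ge_min lexx.
have g0 : 0 < g by rewrite /g lt_min eps0 /=; lra.
have g_bd : 0 < g <= 1 / 2 by rewrite g0 /g ge_min lexx orbT.
exists (g ^+ 2 / 24); first by rewrite divr_gt0 ?exprn_gt0.
move=> A k [N k_lt] wc; apply: (@le_lt_trans _ _ (5%:R / 6%:R + g / 3)); last lra.
apply: limn_inf_le; first exact: bounded_worst_ratio.
move=> N0; exists (3 * (N0 + N).+1)%N; first lia.
by apply: (worst_ratio_hard _ A k) => //; apply: k_lt; lia.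
Qed.
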